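(* Let $P$ be a Markov kernel on a finite set $\Omega$ (in the paper, a coordinate-replacement kernel restricted to its invariant set $\Omega$), let $G\subseteq\Omega$, and let $K_G(x,y)=P(x,y)\mathbf 1_{\{x,y\in G\}}$ for $x,y\in G$. For $x\in\Omega$ and integer $s\ge0$, let $\alpha^x_s=\delta_xP^s$, $\alpha^x_{s,G}(A)=\alpha^x_s(A\cap G)$, $\widetilde\alpha^x_{s,t}=\alpha^x_se^{t(P-I)}$ and $\lambda^x_{s,t}=\alpha^x_{s,G}e^{t(K_G-I)}$. Then for every integer $s\ge0$, integer $L\ge1$ and $t\ge0$, \[ \|\widetilde\alpha^x_{s,t}-\lambda^x_{s,t}\|_{\mathrm{TV}}\le\mathbb P_x(\exists\,u\in\{0,1,\dots,L\}:X_{s+u}\notin G)+\mathbb P(\operatorname{Poi}(t)>L), \] and the same right-hand side also bounds $1-\lambda^x_{s,t}(G)$.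
   Context: $(X_t)_{t\ge0}$ is the discrete-time chain with kernel $P$, with law $\mathbb P_x$ when started at $x$. $\operatorname{Poi}(t)$ is a Poisson random variable with mean $t$. $\lambda^x_{s,t}$ is a subprobability measure on $G$; the total variation distance between (sub)probability measures is $\|\nu-\lambda\|_{\mathrm{TV}}=\sup_A|\nu(A)-\lambda(A)|$. *)

From HB Require Import structures.
From mathcomp Require Import all_boot all_order all_algebra.
From mathcomp Require Import all_classical all_reals all_analysis.
Set Implicit Arguments. Unset Strict Implicit. Unset Printing Implicit Defensive.
Import Order.TTheory GRing.Theory Num.Theory.
Local Open Scope ring_scope.

Section Defs.
Variables (R : realType) (T : finType).

(* kernels / matrices indexed by T, and (sub)measures on T as functions *)
Definition kmat := T -> T -> R.
Definition kvec := T -> R.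

Definition kid : kmat := fun x y => if x == y then 1 else 0.
Definition kmul (A B : kmat) : kmat := fun x z => \sum_(y : T) A x y * B y z.
Definition kpow (A : kmat) (n : nat) : kmat := iter n (kmul^~ A) kid.
Definition vmul (a : kvec) (A : kmat) : kvec := fun y => \sum_(x : T) a x * A x y.

Definition kexp (A : kmat) : kmat := fun x y =>
  limn (fun N : nat => \sum_(k < N) kpow A k x y / (k`!)%:R).

Definition kgen (t : R) (A : kmat) : kmat := fun x y => t * (A x y - kid x y).

Definition krestr (P : kmat) (G : {set T}) : kmat :=
  fun x y => if (x \in G) && (y \in G) then P x y else 0.

Definition kdelta (x : T) : kvec := fun y => if y == x then 1 else 0.

Definition vmass (a : kvec) (A : {set T}) : R := \sum_(y in A) a y.

Definition tvdist (nu la : kvec) : R :=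
  \big[Num.max/0]_(A : {set T}) `|vmass nu A - vmass la A|.

Definition markov_kernel (P : kmat) : Prop :=
  (forall x y, 0 <= P x y) /\ (forall x, \sum_(y : T) P x y = 1).

(* law of the chain X_0 = x, ..., X_N: probability of an event on paths *)
Definition path_prob (P : kmat) (x : T) (N : nat)
  (E : pred {ffun 'I_N.+1 -> T}) : R :=
  \sum_(w : {ffun 'I_N.+1 -> T} | (w ord0 == x) && E w)
     \prod_(i < N) P (w (widen_ord (leqnSn N) i)) (w (lift ord0 i)).

Definition poisson_tail (t : R) (L : nat) : R :=
  1 - \sum_(k < L.+1) expR (- t) * t ^+ k / (k`!)%:R.

End Defs.
Arguments path_prob {R T} P x N E.

From mathcomp Require Import all_boot all_order all_algebra.
From mathcomp Require Import all_classical all_reals all_analysis.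
From mathcomp Require Import ring.
Set Implicit Arguments. Unset Strict Implicit. Unset Printing Implicit Defensive.
Import Order.TTheory GRing.Theory Num.Theory numFieldNormedType.Exports.
Local Open Scope classical_set_scope.
Local Open Scope ring_scope.

(* Both semigroups are Poisson mixtures of the discrete chains: for a
   substochastic kernel A and t >= 0, e^{t(A - I)} = e^{-t} sum_j t^j/j! A^j,
   a Cauchy product of exponential series whose convergence is controlled by
   that of e^{2t}.  Since K_G <= P entrywise and alpha_{s,G} <= alpha_s, the
   difference alpha~ - lambda is pointwise nonnegative, so its total variation
   is its total mass e^{-t} sum_j t^j/j! (1 - |alpha_{s,G} K_G^j|).  The mass
   |alpha_{s,G} K_G^j| is nonincreasing in j and, for j = L, is the probability
   that the chain stays in G at times s, ..., s + L; bounding 1 - |.| by the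
   exit probability for j <= L and by 1 for j > L leaves the Poisson tail.
   As lambda lives on G and alpha~ has mass 1, 1 - lambda(G) is that same
   total mass. *)

Section KernelAlgebra.
Variables (R : realType) (T : finType).
Implicit Types (A : kmat R T) (a : kvec R T).

Definition vrestr a (G : {set T}) : kvec R T := fun y => if y \in G then a y else 0.

Lemma kpowS A n : kpow A n.+1 = kmul (kpow A n) A.
Proof. by []. Qed.

Lemma vmul_kid a y : vmul a (@kid R T) y = a y.
Proof.
rewrite /vmul (bigD1 y) //= /kid eqxx mulr1 big1 ?addr0 // => z /negbTE ->.
by rewrite mulr0.
Qed.

Lemma vmul_kdelta (x : T) A y : vmul (kdelta R x) A y = A x y.
Proof.
rewrite /vmul (bigD1 x) //= /kdelta eqxx mul1r big1 ?addr0 // => z /negbTE ->.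
by rewrite mul0r.
Qed.

Lemma vmul_kpowS a A n z :
  vmul a (kpow A n.+1) z = \sum_y vmul a (kpow A n) y * A y z.
Proof.
rewrite /vmul kpowS /kmul; under eq_bigr do rewrite mulr_sumr.
rewrite exchange_big /=; apply: eq_bigr => y _; rewrite mulr_suml.
by apply: eq_bigr => i _; rewrite mulrA.
Qed.

Lemma sum_kdelta (x : T) : \sum_y kdelta R x y = 1.
Proof. by rewrite (bigD1 x) //= /kdelta eqxx big1 ?addr0 // => y /negbTE ->. Qed.

Lemma kpow_kgen A t k x y :
  kpow (kgen t A) k x y =
  \sum_(0 <= j < k.+1) t ^+ k * (-1) ^+ (k - j) * 'C(k, j)%:R * kpow A j x y.
Proof.
elim: k y => [|k IH] y; first by rewrite big_nat1 /= expr0 !mul1r.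
rewrite kpowS /kmul; under eq_bigr do rewrite IH /kgen !mulrBr.
rewrite sumrB.
set c := fun j => t ^+ k * (-1) ^+ (k - j) * 'C(k, j)%:R.
have -> : \sum_z (\sum_(0 <= j < k.+1) c j * kpow A j x z) * (t * A z y)
    = t * \sum_(0 <= j < k.+1) c j * kpow A j.+1 x y.
  rewrite [RHS]mulr_sumr; under eq_bigr do rewrite mulr_suml.
  rewrite exchange_big; apply: eq_bigr => j _.
  rewrite kpowS /kmul !mulr_sumr; apply: eq_bigr => z _; ring.
have -> : \sum_z (\sum_(0 <= j < k.+1) c j * kpow A j x z) * (t * kid R z y)
    = t * \sum_(0 <= j < k.+1) c j * kpow A j x y.
  under eq_bigr do rewrite mulrA.
  have := vmul_kid (fun z => (\sum_(0 <= j < k.+1) c j * kpow A j x z) * t) y.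
  by rewrite /vmul => ->; rewrite mulrC.
rewrite [RHS]big_nat_recl // [X in _ - t * X]big_nat_recl //.
rewrite [X in _ - t * (_ + X)](_ : _ = \sum_(0 <= j < k.+1)
    t ^+ k * (-1) ^+ (k - j.+1) * 'C(k, j.+1)%:R * kpow A j.+1 x y); last first.
  by rewrite big_nat_recr //= bin_small // mulr0 mul0r addr0.
rewrite /c mulrDr opprD addrCA; congr (_ + _); first by rewrite !subn0 !bin0 !exprS; ring.
rewrite !mulr_sumr -sumrB; apply: eq_big_nat => j /andP[_ jk].
rewrite binS natrD subSS.
move: jk; rewrite ltnS leq_eqVlt => /orP[/eqP->|jk'].
  by rewrite (bin_small (ltnSn k)) binn subnn expr0 exprS; ring.
by rewrite -(subnSK jk') !exprS; ring.
Qed.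

Lemma tvdist_le_sum_sub (nu la : kvec R T) : (forall y, la y <= nu y) ->
  tvdist nu la <= \sum_y (nu y - la y).
Proof.
move=> le_la_nu; have sub_ge0 y : 0 <= nu y - la y by rewrite subr_ge0.
apply: bigmax_le => [|A _]; first exact: sumr_ge0.
rewrite /vmass -sumrB ger0_norm; last exact: sumr_ge0.
by rewrite [leRHS](bigID (mem A)) /= lerDl sumr_ge0.
Qed.

End KernelAlgebra.

Section Substochastic.
Variables (R : realType) (T : finType).
Implicit Types (A P : kmat R T) (a : kvec R T).

Definition substochastic A :=
  (forall x y, 0 <= A x y) /\ (forall x, \sum_y A x y <= 1).

Lemma markov_substochastic P : markov_kernel P -> substochastic P.
Proof. by case=> P0 P1; split=> // x; rewrite P1. Qed.

Lemma krestr_substochastic P G : substochastic P -> substochastic (krestr P G).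
Proof.
case=> P0 P1; have K0 x y : 0 <= krestr P G x y by rewrite /krestr; case: ifP.
split=> // x; apply: le_trans (P1 x); apply: ler_sum => y _.
by rewrite /krestr; case: ifP.
Qed.

Lemma kpow_ge0 A : (forall x y, 0 <= A x y) -> forall k x y, 0 <= kpow A k x y.
Proof.
move=> A0; elim=> [|k IH] x y; first by rewrite /= /kid; case: eqP.
by rewrite kpowS /kmul; apply: sumr_ge0 => z _; apply: mulr_ge0.
Qed.

Lemma sum_kpow_le1 A : substochastic A -> forall k x, \sum_y kpow A k x y <= 1.
Proof.
move=> [A0 A1]; elim=> [|k IH] x.
  rewrite /= /kid (bigD1 x) //= eqxx big1 ?addr0 // => y.
  by rewrite eq_sym => /negbTE ->.
rewrite kpowS /kmul exchange_big /=; apply: le_trans (IH x); apply: ler_sum => z _.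
by rewrite -mulr_sumr ler_piMr ?kpow_ge0.
Qed.

Lemma kpow_le1 A : substochastic A -> forall k x y, kpow A k x y <= 1.
Proof.
move=> hA k x y; apply: le_trans _ (sum_kpow_le1 hA k x); rewrite (bigD1 y) //=.
by rewrite lerDl sumr_ge0 // => z _; apply: kpow_ge0; case: hA.
Qed.

Lemma sum_vmul_kpow_markov P a n : markov_kernel P ->
  \sum_y vmul a (kpow P n) y = \sum_y a y.
Proof.
case=> _ P1; elim: n => [|n IH]; first by under eq_bigr do rewrite vmul_kid.
rewrite -IH; under eq_bigr do rewrite vmul_kpowS.
by rewrite exchange_big /=; apply: eq_bigr => y _; rewrite -mulr_sumr P1 mulr1.
Qed.

Lemma sum_vmul_kpowS_le A a n : substochastic A -> (forall y, 0 <= a y) ->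
  \sum_y vmul a (kpow A n.+1) y <= \sum_y vmul a (kpow A n) y.
Proof.
move=> [A0 A1] a0; under eq_bigr do rewrite vmul_kpowS.
rewrite exchange_big /=; apply: ler_sum => y _; rewrite -mulr_sumr ler_piMr //.
by apply: sumr_ge0 => z _; rewrite mulr_ge0 ?kpow_ge0.
Qed.

End Substochastic.

Section ExponentialSeries.
Variable R : realType.
Implicit Types (t x y : R) (a b : nat -> R).

Lemma cvg_series_exp_coeff x : series (exp_coeff x) @ \oo --> expR x.
Proof. exact: is_cvg_series_exp_coeff. Qed.

Lemma series_exp_coeff_le_expR x N : 0 <= x -> series (exp_coeff x) N <= expR x.
Proof.
move=> x0; apply: nondecreasing_cvgn_le; last exact: is_cvg_series_exp_coeff.
apply/nondecreasing_seqP => n; rewrite /series /= big_nat_recr //= lerDl.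
exact: exp_coeff_ge0.
Qed.

Lemma norm_expRN_sub_series t n : 0 <= t ->
  `|expR (- t) - series (exp_coeff (- t)) n| <= expR t - series (exp_coeff t) n.
Proof.
move=> t0; rewrite -subr_ge0.
pose d x N := series (exp_coeff x) N - series (exp_coeff x) n.
apply: (@cvgr_to_ge _ \oo _ _ (fun N => d t N - `|d (- t) N|)).
  apply: cvgB; first by apply: cvgB; [exact: cvg_series_exp_coeff | exact: cvg_cst].
  by apply: cvg_norm; apply: cvgB; [exact: cvg_series_exp_coeff | exact: cvg_cst].
near=> N; have nN : (n <= N)%N by near: N; exact: nbhs_infty_ge.
rewrite subr_ge0 /d /series /= !(@big_cat_nat _ _ _ n 0 N) //= ![_ + \sum_(n <= _ < N) _]addrC !addrK.
apply: le_trans (ler_norm_sum _ _ _) _; apply: ler_sum => m _.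
by rewrite /exp_coeff /= normrM normrX normrN (ger0_norm t0) ger0_norm // invr_ge0.
Unshelve. all: by end_near.
Qed.

Lemma sum_triangle_exchange a b N :
  \sum_(0 <= k < N) \sum_(0 <= j < k.+1) a j * b (k - j)%N =
  \sum_(0 <= j < N) a j * series b (N - j)%N.
Proof.
elim: N => [|N IH]; first by rewrite !big_geq.
rewrite big_nat_recr //= IH [RHS]big_nat_recr //= [in LHS](big_nat_recr N) //=.
rewrite subSnn subnn /series /= big_nat1 addrA -big_split /=; congr (_ + _).
apply: eq_big_nat => j /andP[_ jN].
by rewrite (subSn (ltnW jN)) /series /= big_nat_recr //= mulrDr.
Qed.

Lemma exp_coeff_mul x y k j : (j <= k)%N ->
  exp_coeff x j * exp_coeff y (k - j)%N = 'C(k, j)%:R * x ^+ j * y ^+ (k - j) / k`!%:R.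
Proof.
move=> jk; rewrite /exp_coeff /= -(bin_fact jk) !natrM.
have h1 : j`!%:R != 0 :> R by rewrite pnatr_eq0 -lt0n fact_gt0.
have h2 : (k - j)`!%:R != 0 :> R by rewrite pnatr_eq0 -lt0n fact_gt0.
have h3 : 'C(k, j)%:R != 0 :> R by rewrite pnatr_eq0 -lt0n bin_gt0.
by field; rewrite h1 h2 h3.
Qed.

Lemma exp_coeff_convolution x y k :
  \sum_(0 <= j < k.+1) exp_coeff x j * exp_coeff y (k - j)%N = exp_coeff (x + y) k.
Proof.
rewrite [RHS]/exp_coeff /= addrC exprDn mulr_suml big_mkord.
apply: eq_bigr => -[j /= jk] _; rewrite exp_coeff_mul // -mulr_natl; ring.
Qed.

Section DominatedCauchyProduct.
Variables (t : R) (a : nat -> R).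
Hypotheses (t0 : 0 <= t) (a0 : forall j, 0 <= a j) (a_le : forall j, a j <= exp_coeff t j).

Let conv N := \sum_(0 <= k < N) \sum_(0 <= j < k.+1) a j * exp_coeff (- t) (k - j)%N.

Lemma is_cvg_series_dominated : cvgn (series a).
Proof.
apply: series_le_cvg a0 _ a_le (is_cvg_series_exp_coeff t) => j.
exact: exp_coeff_ge0.
Qed.

Lemma convolution_exp_coeffN_error N :
  `|conv N - series a N * expR (- t)| <=
  series (exp_coeff t) N * expR t - series (exp_coeff (t + t)) N.
Proof.
rewrite /conv sum_triangle_exchange /series /= mulr_suml -sumrB.
apply: le_trans (ler_norm_sum _ _ _) _.
rewrite -[X in _ <= _ - X](eq_bigr _ (fun k _ => exp_coeff_convolution t t k)).
rewrite sum_triangle_exchange /series /= mulr_suml -sumrB; apply: ler_sum => j _.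
rewrite -!mulrBr normrM (ger0_norm (a0 j)) ler_pM // distrC.
exact: norm_expRN_sub_series.
Qed.

Lemma cvg_convolution_exp_coeffN : conv @ \oo --> limn (series a) * expR (- t).
Proof.
pose err N := series (exp_coeff t) N * expR t - series (exp_coeff (t + t)) N.
have err_cvg : err @ \oo --> 0.
  rewrite -(subrr (expR (t + t))) [X in X - _]expRD.
  by apply: cvgB; [apply: cvgMl; exact: cvg_series_exp_coeff |
    exact: cvg_series_exp_coeff].
have diff_cvg : (fun N => conv N - series a N * expR (- t)) @ \oo --> 0.
  apply: (@squeeze_cvgr _ _ _ _ (fun N => - err N) err); last exact: err_cvg.
    by near=> N; rewrite -ler_norml convolution_exp_coeffN_error.
  by rewrite -oppr0; exact: cvgN err_cvg.
have -> : conv = fun N => (conv N - series a N * expR (- t)) + series a N * expR (- t).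
  by apply/funext => N; rewrite subrK.
rewrite -[X in _ --> X]add0r; apply: cvgD diff_cvg _.
by apply: cvgMl; exact: is_cvg_series_dominated.
Unshelve. all: by end_near.
Qed.

End DominatedCauchyProduct.

End ExponentialSeries.

Section Poissonization.
Variables (R : realType) (T : finType).
Implicit Types (A : kmat R T) (a : kvec R T).

Lemma kpow_kgen_fact A t k x y :
  kpow (kgen t A) k x y / k`!%:R =
  \sum_(0 <= j < k.+1) exp_coeff t j * kpow A j x y * exp_coeff (- t) (k - j)%N.
Proof.
rewrite kpow_kgen mulr_suml; apply: eq_big_nat => j /andP[_]; rewrite ltnS => jk.
rewrite [RHS]mulrAC exp_coeff_mul // [(- t) ^+ _]exprNn -{1}(subnKC jk) exprD; ring.
Qed.

Lemma kexp_kgen_cvg A t x y : substochastic A -> 0 <= t ->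
  (fun N => expR (- t) * \sum_(0 <= j < N) exp_coeff t j * kpow A j x y) @ \oo
    --> kexp (kgen t A) x y.
Proof.
move=> hA t0; pose a j := exp_coeff t j * kpow A j x y.
have a0 j : 0 <= a j by rewrite mulr_ge0 ?exp_coeff_ge0 ?kpow_ge0 //; case: hA.
have a_le j : a j <= exp_coeff t j by rewrite ler_piMr ?exp_coeff_ge0 ?kpow_le1.
have -> : kexp (kgen t A) x y = limn (series a) * expR (- t).
  apply: cvg_lim => //; apply: cvg_trans _ (cvg_convolution_exp_coeffN t0 a0 a_le).
  apply: near_eq_cvg; near=> N.
  by rewrite big_mkord; apply: eq_bigr => k _; rewrite kpow_kgen_fact.
rewrite [X in _ --> X]mulrC; apply: cvgMr; exact: is_cvg_series_dominated t0 a0 a_le.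
Unshelve. all: by end_near.
Qed.

Lemma vmul_kexp_kgen_cvg a A t y : substochastic A -> 0 <= t ->
  (fun N => expR (- t) * \sum_(0 <= j < N) exp_coeff t j * vmul a (kpow A j) y) @ \oo
    --> vmul a (kexp (kgen t A)) y.
Proof.
move=> hA t0.
have -> : (fun N => expR (- t) * \sum_(0 <= j < N) exp_coeff t j * vmul a (kpow A j) y)
    = fun N => \sum_x a x * (expR (- t) * \sum_(0 <= j < N) exp_coeff t j * kpow A j x y).
  apply/funext => N; rewrite /vmul mulr_sumr.
  under [RHS]eq_bigr do rewrite mulr_sumr mulr_sumr.
  rewrite exchange_big /=; apply: eq_bigr => j _.
  by rewrite !mulr_sumr; apply: eq_bigr => x _; ring.
apply: cvg_big => // [|x _]; first exact: add_continuous.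
by apply: cvgMr; exact: kexp_kgen_cvg.
Qed.

End Poissonization.

Lemma poisson_mixture_le (R : realType) (t p : R) (L N : nat) (c : nat -> R) :
  0 <= t -> 0 <= p -> (forall j, 0 <= c j <= 1) -> (forall j, (j <= L)%N -> c j <= p) ->
  expR (- t) * \sum_(0 <= j < N) exp_coeff t j * c j <= p + poisson_tail t L.
Proof.
move=> t0 p0 c01 c_le_p.
have e0 j : 0 <= exp_coeff t j := exp_coeff_ge0 j t0.
pose tail j := if (L < j)%N then exp_coeff t j else 0.
have tail_ge0 j : 0 <= tail j by rewrite /tail; case: ifP.
have split_terms : \sum_(0 <= j < N) exp_coeff t j * c j <=
    p * series (exp_coeff t) N + \sum_(0 <= j < N) tail j.
  rewrite /series /= mulr_sumr -big_split /=; apply: ler_sum => j _.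
  have /andP[c0 c1] := c01 j; rewrite /tail; case: (leqP j L) => hj.
    by rewrite addr0 mulrC ler_wpM2r // c_le_p.
  by apply: ler_wpDl; [rewrite mulr_ge0 | rewrite ler_piMr].
have tail_le : \sum_(0 <= j < N) tail j <= expR t - series (exp_coeff t) L.+1.
  rewrite lerBrDl; apply: le_trans (series_exp_coeff_le_expR (N + L.+1) t0).
  rewrite /series /= (@big_cat_nat _ _ _ L.+1 0 (N + L.+1)) ?leq_addl //= lerD2l.
  apply: (@le_trans _ _ (\sum_(0 <= j < N + L.+1) tail j)).
    by rewrite (@big_cat_nat _ _ _ N 0 (N + L.+1)) ?leq_addr //= lerDl sumr_ge0.
  rewrite (@big_cat_nat _ _ _ L.+1 0 (N + L.+1)) ?leq_addl //= big_nat big1 ?add0r.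
    by apply: ler_sum_nat => j /andP[Lj _]; rewrite /tail Lj.
  by move=> j /andP[_ jL]; rewrite /tail ltnNge -ltnS jL.
have eE : expR (- t) * expR t = 1 by rewrite mulrC expRxMexpNx_1.
apply: (@le_trans _ _ (expR (- t) * (p * series (exp_coeff t) N +
    (expR t - series (exp_coeff t) L.+1)))).
  by rewrite ler_wpM2l ?expR_ge0 // (le_trans split_terms) // lerD2l.
rewrite mulrDr; apply: lerD.
  by rewrite mulrCA ler_piMr // -eE ler_wpM2l ?expR_ge0 ?series_exp_coeff_le_expR.
rewrite /poisson_tail mulrBr eE lerB // /series /= big_mkord mulr_sumr.
by apply: ler_sum => k _; rewrite /exp_coeff /= mulrA.
Qed.

Section KilledChain.
Variables (R : realType) (T : finType) (P : kmat R T) (x : T).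

Definition path_at N (w : {ffun 'I_N.+1 -> T}) (k : nat) : T := w (inord k).

Definition path_weight N (w : {ffun 'I_N.+1 -> T}) : R :=
  \prod_(0 <= i < N) P (path_at w i) (path_at w i.+1).

Definition path_obeys N (g : nat -> T -> bool) (w : {ffun 'I_N.+1 -> T}) : bool :=
  all (fun k => g k (path_at w k)) (iota 0 N.+1).

Fixpoint killed_law (g : nat -> T -> bool) (n : nat) : kvec R T :=
  if n is m.+1 then fun z => if g n z then \sum_y killed_law g m y * P y z else 0
  else fun y => if (y == x) && g 0%N y then 1 else 0.

Definition path_rcons N (w : {ffun 'I_N.+1 -> T}) (z : T) : {ffun 'I_N.+2 -> T} :=
  [ffun i : 'I_N.+2 => if (i < N.+1)%N then path_at w i else z].

Definition path_belast N (w : {ffun 'I_N.+2 -> T}) : {ffun 'I_N.+1 -> T} :=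
  [ffun i : 'I_N.+1 => path_at w i].

Lemma path_at0 N (w : {ffun 'I_N.+1 -> T}) : path_at w 0 = w ord0.
Proof. by rewrite /path_at; congr (w _); apply: val_inj; rewrite /= inordK. Qed.

Lemma path_at_rcons N w z k : (k < N.+1)%N -> path_at (@path_rcons N w z) k = path_at w k.
Proof. by move=> kN; rewrite /path_at ffunE inordK ?kN // ltnS ltnW. Qed.

Lemma path_at_rcons_last N w z : path_at (@path_rcons N w z) N.+1 = z.
Proof. by rewrite /path_at ffunE inordK // ltnn. Qed.

Lemma path_rconsK N (w : {ffun 'I_N.+1 -> T}) z : path_belast (path_rcons w z) = w.
Proof. by apply/ffunP => i; rewrite ffunE path_at_rcons // /path_at inord_val. Qed.

Lemma path_belastK N (w : {ffun 'I_N.+2 -> T}) z :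
  path_at w N.+1 = z -> path_rcons (path_belast w) z = w.
Proof.
move=> wz; apply/ffunP => i; rewrite ffunE; case: ifP => iN.
  by rewrite /path_at ffunE inordK // /path_at inord_val.
have -> : i = inord N.+1.
  by apply: val_inj; rewrite /= inordK //; apply/eqP; rewrite eqn_leq -ltnS ltn_ord leqNgt iN.
by rewrite -wz.
Qed.

Lemma path_weight_rcons N w z :
  path_weight (@path_rcons N w z) = path_weight w * P (path_at w N) z.
Proof.
rewrite /path_weight big_nat_recr //= path_at_rcons_last path_at_rcons //.
congr (_ * _); apply: eq_big_nat => i /andP[_ iN].
by rewrite !path_at_rcons // ltnS // ltnW.
Qed.

Lemma path_obeys_rcons N g w z :
  path_obeys g (@path_rcons N w z) = path_obeys g w && g N.+1 z.
Proof.
rewrite /path_obeys.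
have -> : iota 0 N.+2 = iota 0 N.+1 ++ [:: N.+1] by rewrite -addn1 iotaD.
rewrite all_cat all_seq1 path_at_rcons_last.
by congr (_ && _); apply: eq_in_all => k; rewrite mem_iota => /andP[_ kN]; rewrite path_at_rcons.
Qed.

Lemma sum_path_weight_last N g z :
  \sum_(w : {ffun 'I_N.+1 -> T} | [&& path_at w 0 == x, path_obeys g w & path_at w N == z])
    path_weight w = killed_law g N z.
Proof.
elim: N z => [|N IH] z /=.
  have obeys0 (w : {ffun 'I_1 -> T}) : path_obeys g w = g 0%N (w ord0).
    by rewrite /path_obeys /= andbT path_at0.
  case: ifPn => [/andP[/eqP-> gx]|zx].
    rewrite (big_pred1 [ffun => x]) ?/path_weight ?big_geq // => w /=.
    rewrite obeys0 !path_at0.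
    apply/and3P/eqP => [[/eqP wx _ _]|->]; last by rewrite ffunE eqxx gx.
    by apply/ffunP => i; rewrite ffunE ord1.
  rewrite big_pred0 // => w; rewrite obeys0 !path_at0.
  by apply/and3P => -[/eqP wx gw /eqP wz]; move: zx; rewrite -wz wx eqxx -wx gw.
rewrite (reindex_onto (fun w => path_rcons w z) (@path_belast N)); last first.
  by move=> w /and3P[_ _ /eqP]; apply: path_belastK.
under eq_bigl => w do
  rewrite path_rconsK eqxx andbT path_obeys_rcons path_at_rcons_last eqxx andbT path_at_rcons //.
under eq_bigr => w _ do rewrite path_weight_rcons.
case: ifPn => gz; last by rewrite big_pred0 // => w; rewrite !andbF.
rewrite (partition_big (fun w => path_at w N) predT) //=; apply: eq_bigr => y _.
rewrite -IH mulr_suml; apply: congr_big => // [w|w /andP[_ /eqP ->]] //.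
by rewrite andbT andbA.
Qed.

Lemma sum_path_weight N g :
  \sum_(w : {ffun 'I_N.+1 -> T} | (path_at w 0 == x) && path_obeys g w) path_weight w
  = \sum_z killed_law g N z.
Proof.
rewrite (partition_big (fun w => path_at w N) predT) //=; apply: eq_bigr => z _.
by rewrite -sum_path_weight_last; apply: eq_bigl => w; rewrite andbA.
Qed.

Lemma path_probE N (E : pred {ffun 'I_N.+1 -> T}) :
  path_prob P x N E = \sum_(w | (path_at w 0 == x) && E w) path_weight w.
Proof.
rewrite /path_prob; apply: congr_big => // [w|w _]; first by rewrite path_at0.
rewrite /path_weight big_mkord; apply: eq_bigr => i _; rewrite /path_at.
have iN := ltn_ord i.
by congr (P (w _) (w _)); apply: val_inj; rewrite /= ?/bump inordK // ltnS ltnW.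
Qed.

Lemma killed_law_predT n : killed_law (fun _ _ => true) n =1 vmul (kdelta R x) (kpow P n).
Proof.
elim: n => [|n IH] y /=; first by rewrite vmul_kdelta /kid andbT eq_sym.
by rewrite vmul_kpowS; apply: eq_bigr => z _; rewrite IH.
Qed.

End KilledChain.

Section PoissonizedComparison.
Variables (R : realType) (T : finType) (P K : kmat R T) (a b : kvec R T) (t : R).
Hypotheses (hP : markov_kernel P) (K0 : forall y z, 0 <= K y z)
  (K_le_P : forall y z, K y z <= P y z) (b0 : forall y, 0 <= b y)
  (b_le_a : forall y, b y <= a y) (a1 : \sum_y a y = 1) (t0 : 0 <= t).

Let substochastic_K : substochastic K.
Proof.
split=> // y; case: hP => _ /(_ y) <-.
by apply: ler_sum => z _; exact: K_le_P.
Qed.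

Let vmul_b_kpow_ge0 j y : 0 <= vmul b (kpow K j) y.
Proof. by apply: sumr_ge0 => z _; rewrite mulr_ge0 ?kpow_ge0. Qed.

Let vmul_kpow_le j y : vmul b (kpow K j) y <= vmul a (kpow P j) y.
Proof.
elim: j y => [|j IH] y; first by rewrite !vmul_kid.
rewrite !vmul_kpowS; apply: ler_sum => z _.
by rewrite ler_pM ?vmul_b_kpow_ge0.
Qed.

Let mass_a_kpow j : \sum_y vmul a (kpow P j) y = 1.
Proof. by rewrite sum_vmul_kpow_markov. Qed.

Let mass_b_kpow_le1 j : \sum_y vmul b (kpow K j) y <= 1.
Proof. by rewrite -(mass_a_kpow j) ler_sum. Qed.

Lemma vmul_kexp_le y :
  vmul b (kexp (kgen t K)) y <= vmul a (kexp (kgen t P)) y.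
Proof.
rewrite -subr_ge0; apply: (cvgr_to_ge (cvgB
  (vmul_kexp_kgen_cvg (markov_substochastic hP) t0)
  (vmul_kexp_kgen_cvg substochastic_K t0))).
near=> N; rewrite !fctE -mulrBr -sumrB mulr_ge0 ?expR_ge0 //.
by apply: sumr_ge0 => j _; rewrite -mulrBr mulr_ge0 ?exp_coeff_ge0 ?subr_ge0.
Unshelve. all: by end_near.
Qed.

Let cvg_sum_vmul (c : kvec R T) (A : kmat R T) : substochastic A ->
  (fun N => \sum_y expR (- t) * \sum_(0 <= j < N) exp_coeff t j * vmul c (kpow A j) y)
    @ \oo --> \sum_y vmul c (kexp (kgen t A)) y.
Proof.
move=> hA; apply: cvg_big => // [|y _]; first exact: add_continuous.
exact: vmul_kexp_kgen_cvg.
Qed.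

Lemma sum_vmul_kexp_markov : \sum_y vmul a (kexp (kgen t P)) y = 1.
Proof.
have := @cvg_sum_vmul a P (markov_substochastic hP).
have -> : (fun N => \sum_y expR (- t) *
    \sum_(0 <= j < N) exp_coeff t j * vmul a (kpow P j) y)
    = fun N => expR (- t) * series (exp_coeff t) N.
  apply/funext => N; rewrite -mulr_sumr exchange_big /=; congr (_ * _).
  by apply: eq_bigr => j _; rewrite -mulr_sumr mass_a_kpow mulr1.
move/(cvg_lim _) => <- //; apply: cvg_lim => //.
rewrite -[X in _ --> X](expRxMexpNx_1 t) [X in _ --> X]mulrC.
by apply: cvgMr; exact: cvg_series_exp_coeff.
Qed.

Lemma sum_sub_vmul_kexp_le L p : 1 - \sum_y vmul b (kpow K L) y <= p ->
  \sum_y (vmul a (kexp (kgen t P)) y - vmul b (kexp (kgen t K)) y)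
    <= p + poisson_tail t L.
Proof.
move=> mass_L_le_p.
have mass_mono j : (j <= L)%N -> \sum_y vmul b (kpow K L) y <= \sum_y vmul b (kpow K j) y.
  move=> jL; rewrite -(subnKC jL); elim: (L - j)%N => [|d IH]; first by rewrite addn0.
  by rewrite addnS (le_trans _ IH) ?sum_vmul_kpowS_le.
rewrite sumrB; apply: cvgr_to_le (cvgB (@cvg_sum_vmul a P (markov_substochastic hP))
  (@cvg_sum_vmul b K substochastic_K)) _.
near=> N; rewrite !fctE -sumrB.
under eq_bigr do rewrite -mulrBr -sumrB.
rewrite -mulr_sumr exchange_big /=.
rewrite (eq_bigr (fun j => exp_coeff t j * (1 - \sum_y vmul b (kpow K j) y))); last first.
  move=> j _; rewrite -(mass_a_kpow j) -sumrB mulr_sumr.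
  by apply: eq_bigr => y _; rewrite mulrBr.
apply: poisson_mixture_le => // [|j|j jL].
- by apply: le_trans mass_L_le_p; rewrite subr_ge0.
- by rewrite subr_ge0 mass_b_kpow_le1 lerBlDr lerDl sumr_ge0.
- by apply: le_trans mass_L_le_p; rewrite lerB ?mass_mono.
Unshelve. all: by end_near.
Qed.

End PoissonizedComparison.

Section RestrictedChain.
Variables (R : realType) (T : finType) (P : kmat R T) (G : {set T}).

Lemma vmul_vrestr_kpow_krestr_notin (a : kvec R T) j y : y \notin G ->
  vmul (vrestr a G) (kpow (krestr P G) j) y = 0.
Proof.
case: j => [|j] yG; first by rewrite vmul_kid /vrestr (negbTE yG).
by rewrite vmul_kpowS big1 // => z _; rewrite /krestr (negbTE yG) andbF mulr0.
Qed.

Lemma vmul_kexp_krestr_notin (a : kvec R T) t y : substochastic P -> 0 <= t ->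
  y \notin G -> vmul (vrestr a G) (kexp (kgen t (krestr P G))) y = 0.
Proof.
move=> hP t0 yG.
have := @vmul_kexp_kgen_cvg R T (vrestr a G) _ t y (krestr_substochastic G hP) t0.
rewrite (_ : (fun N => _) = fun=> 0); first by move/(cvg_lim _) => <- //; rewrite lim_cst.
apply/funext => N; rewrite big1 ?mulr0 // => j _.
by rewrite vmul_vrestr_kpow_krestr_notin ?mulr0.
Qed.

Variables (x : T) (s : nat).

Definition in_set_from (k : nat) (y : T) : bool := (s <= k)%N ==> (y \in G).

Lemma killed_law_in_set_from_lt n : (n < s)%N ->
  killed_law P x in_set_from n =1 vmul (kdelta R x) (kpow P n).
Proof.
elim: n => [|n IH] sn y /=; rewrite /in_set_from leqNgt sn /=.
  by rewrite vmul_kdelta /kid andbT eq_sym.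
by rewrite vmul_kpowS; apply: eq_bigr => z _; rewrite IH // ltnW.
Qed.

Lemma killed_law_in_set_from k :
  killed_law P x in_set_from (s + k) =1
  vmul (vrestr (vmul (kdelta R x) (kpow P s)) G) (kpow (krestr P G) k).
Proof.
elim: k => [|k IH] y.
  rewrite addn0 vmul_kid /vrestr.
  case Es: s => [|s'] /=; rewrite /in_set_from Es leqnn /=.
    by rewrite vmul_kdelta /kid; case: (y \in G); rewrite ?andbT ?andbF // eq_sym.
  case: (y \in G) => //; rewrite vmul_kpowS; apply: eq_bigr => z _.
  by rewrite -Es killed_law_in_set_from_lt // Es.
rewrite addnS vmul_kpowS /= {1}/in_set_from (leq_trans (leq_addr k s)) //=.
case yG: (y \in G); last by rewrite big1 // => z _; rewrite /krestr yG andbF mulr0.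
apply: eq_bigr => z _; rewrite IH /krestr yG andbT.
by case zG: (z \in G) => //; rewrite vmul_vrestr_kpow_krestr_notin ?zG // !mul0r.
Qed.

Lemma exists_notin_path_obeys L (w : {ffun 'I_(s + L).+1 -> T}) :
  [exists u : 'I_L.+1, w (inord (s + u)) \notin G] = ~~ path_obeys in_set_from w.
Proof.
apply/existsP/allPn => [[u uG]|[k]].
  exists (s + u)%N; last by rewrite /in_set_from leq_addr.
  by rewrite mem_iota add0n ltnS leq_add2l /= -ltnS ltn_ord.
rewrite mem_iota add0n ltnS /in_set_from negb_imply => kL /andP[sk kG].
have uL : (k - s < L.+1)%N by rewrite ltnS leq_subLR.
by exists (Ordinal uL); rewrite /= subnKC.
Qed.

Lemma path_prob_exit L : markov_kernel P ->
  path_prob P x (s + L)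
    (fun w => [exists u : 'I_L.+1, w (inord (s + u)) \notin G])
  = 1 - \sum_y vmul (vrestr (vmul (kdelta R x) (kpow P s)) G) (kpow (krestr P G) L) y.
Proof.
move=> hP; rewrite path_probE.
have total : \sum_(w : {ffun 'I_(s + L).+1 -> T} | path_at w 0 == x) path_weight P w = 1.
  rewrite (eq_bigl (fun w => (path_at w 0 == x) && path_obeys (fun _ _ => true) w)).
    rewrite sum_path_weight; under eq_bigr do rewrite killed_law_predT.
    by rewrite sum_vmul_kpow_markov // sum_kdelta.
  by move=> w; rewrite [path_obeys _ _](introT allP) ?andbT.
have survive : \sum_(w : {ffun 'I_(s + L).+1 -> T} | (path_at w 0 == x) &&
    ~~ [exists u : 'I_L.+1, w (inord (s + u)) \notin G]) path_weight P w
    = \sum_y vmul (vrestr (vmul (kdelta R x) (kpow P s)) G) (kpow (krestr P G) L) y.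
  under eq_bigl do rewrite exists_notin_path_obeys negbK.
  by rewrite sum_path_weight; apply: eq_bigr => y _; rewrite killed_law_in_set_from.
rewrite -total -survive [in RHS](bigID (fun w : {ffun _ -> T} =>
  [exists u : 'I_L.+1, w (inord (s + u)) \notin G])) /=.
by rewrite addrK.
Qed.

End RestrictedChain.

Theorem lemma2p6 (R : realType) (T : finType) (P : kmat R T) (G : {set T})
  (x : T) (s L : nat) (t : R) :
  markov_kernel P -> (1 <= L)%N -> 0 <= t ->
  let alpha_s := vmul (kdelta R x) (kpow P s) in
  let alpha_sG := fun y => if y \in G then alpha_s y else 0 in
  let alpha_tilde := vmul alpha_s (kexp (kgen t P)) in
  let lambda := vmul alpha_sG (kexp (kgen t (krestr P G))) in
  let bound := path_prob P x (s + L)%N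
      (fun w => [exists u : 'I_L.+1, w (inord (s + u)) \notin G])
      + poisson_tail t L in
  tvdist alpha_tilde lambda <= bound /\ 1 - vmass lambda G <= bound.
Proof.
move=> hP _ t0 alpha_s alpha_sG alpha_tilde lambda bound.
have [P0 _] := hP.
have K0 y z : 0 <= krestr P G y z by rewrite /krestr; case: ifP.
have K_le_P y z : krestr P G y z <= P y z by rewrite /krestr; case: ifP.
have alpha_ge0 y : 0 <= alpha_s y by rewrite /alpha_s vmul_kdelta kpow_ge0.
have alphaG_ge0 y : 0 <= alpha_sG y by rewrite /alpha_sG; case: ifP.
have alphaG_le y : alpha_sG y <= alpha_s y by rewrite /alpha_sG; case: ifP.
have alpha1 : \sum_y alpha_s y = 1 by rewrite sum_vmul_kpow_markov // sum_kdelta.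
have lambda_le y : lambda y <= alpha_tilde y by apply: vmul_kexp_le.
have sum_le : \sum_y (alpha_tilde y - lambda y) <= bound.
  by rewrite /bound path_prob_exit //; apply: sum_sub_vmul_kexp_le.
split; first exact: le_trans (tvdist_le_sum_sub lambda_le) sum_le.
apply: le_trans sum_le; rewrite sumrB sum_vmul_kexp_markov //.
rewrite /vmass [X in _ <= _ - X](bigID (mem G)) /= [X in _ - (_ + X)]big1 ?addr0 // => y yG.
by apply: vmul_kexp_krestr_notin => //; exact: markov_substochastic.
Qed.
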